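(* An element $r\in\widetilde{\mathbb{K}}_{sm}$ is non-invertible if and only if it is a zero divisor (i.e., there exists $s\in\widetilde{\mathbb{K}}_{sm}$, $s\neq0$, with $rs=0$).
   Context: Let $I=(0,1]$ and $\mathbb{K}\in\{\mathbb{R},\mathbb{C}\}$. $\mathcal{E}_{M,sm}$ is the set of nets $(r_\varepsilon)_{\varepsilon\in I}\in\mathbb{K}^I$ with $\varepsilon\mapsto r_\varepsilon$ smooth on $I$ and $|r_\varepsilon|=O(\varepsilon^{-N})$ as $\varepsilon\to0$ for some $N\in\mathbb{N}$; $\mathcal{N}_{sm}$ is the set of smooth nets with $|r_\varepsilon|=O(\varepsilon^m)$ for all $m\in\mathbb{N}$; $\widetilde{\mathbb{K}}_{sm}=\mathcal{E}_{M,sm}/\mathcal{N}_{sm}$, a commutative ring with componentwise operations. *)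

From Stdlib Require Import Reals.
From Coquelicot Require Import Coquelicot.
Open Scope R_scope.

(** Nets are modelled as functions [R -> C]; for K = R we require the net
    to take real values on I = (0,1]. Only values on I are relevant. *)
Inductive Kfield := KR | KC.

Definition net := R -> C.

Definition in_I (e : R) : Prop := 0 < e <= 1.

(** A real function is smooth on I = (0,1] if it coincides on I with a
    C^infinity function on the open half line (0,+oo)
    (equivalently, by Borel/Seeley extension, it has one-sided derivatives
    of all orders at 1). *)
Definition smooth_on_I (f : R -> R) : Prop :=
  exists g : R -> R,
    (forall (n : nat) (x : R), 0 < x -> ex_derive_n g n x) /\
    (forall e, in_I e -> g e = f e).

Definition smooth_net (K : Kfield) (r : net) : Prop :=
  smooth_on_I (fun e => Re (r e)) /\ smooth_on_I (fun e => Im (r e)) /\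
  (K = KR -> forall e, in_I e -> Im (r e) = 0).

Definition moderate (r : net) : Prop :=
  exists (N : nat) (c eta : R), 0 < c /\ 0 < eta <= 1 /\
    forall e, 0 < e <= eta -> Cmod (r e) <= c * (/ e) ^ N.

Definition negligible (r : net) : Prop :=
  forall m : nat, exists (c eta : R), 0 < c /\ 0 < eta <= 1 /\
    forall e, 0 < e <= eta -> Cmod (r e) <= c * e ^ m.

Definition EMsm (K : Kfield) (r : net) : Prop := smooth_net K r /\ moderate r.
Definition Nsm (K : Kfield) (r : net) : Prop := smooth_net K r /\ negligible r.

Definition net_mul (r s : net) : net := fun e => Cmult (r e) (s e).
Definition net_sub (r s : net) : net := fun e => Cminus (r e) (s e).
Definition net_one : net := fun _ => RtoC 1.

(** Equality in the quotient K~_sm = E_{M,sm} / N_{sm} of the classes of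
    representatives r, s. *)
Definition gen_eq (K : Kfield) (r s : net) : Prop := Nsm K (net_sub r s).

Definition gen_invertible (K : Kfield) (r : net) : Prop :=
  exists s, EMsm K s /\ gen_eq K (net_mul r s) net_one.

Definition gen_zero_divisor (K : Kfield) (r : net) : Prop :=
  exists s, EMsm K s /\ ~ Nsm K s /\ Nsm K (net_mul r s).

From Stdlib Require Import Reals Lra Lia Classical ClassicalEpsilon.
From Coquelicot Require Import Coquelicot.
Open Scope R_scope.

(* A zero divisor [r] with [r s = 0], [s <> 0] is not invertible: if [r t = 1] then
   [s = t (r s) - s (r t - 1)] would be negligible.
   Conversely, let [G] be a smooth function on (0,+oo) dominating every power of [1/e].
   If [|r_e| >= e^n] for small [e] and some [n], then [conj r / (|r|^2 + 1/G)] is an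
   inverse of [r], the term [1/G] being negligible.  Otherwise there are [y_n -> 0] with
   [|r(y_n)| < y_n^n]; choosing [G] moreover at most [exp 1 * y_n^(-n)] at [y_n] (a
   power series in [1/e] whose coefficients are tuned to the [y_n]), the net
   [1 / (1 + G |r|^2)] stays above [1/(1 + exp 1)] along [y_n], yet its product with [r]
   is bounded by [min(|r|, 1/(G |r|))], hence negligible. *)

(** * Smooth functions on an open set *)

Section Smooth.
Variable D : R -> Prop.
Hypothesis D_open : forall x, D x -> locally x D.

Definition Cn (n : nat) (f : R -> R) : Prop :=
  forall k x, (k <= n)%nat -> D x -> ex_derive_n f k x.

Definition Cinf (f : R -> R) : Prop := forall n, Cn n f.

Lemma Derive_n_S f k : Derive_n f (S k) = Derive_n (Derive f) k.
Proof.
  induction k as [|k IH]; [reflexivity|].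
  change (Derive (Derive_n f (S k)) = Derive (Derive_n (Derive f) k)).
  now rewrite IH.
Qed.

Lemma Cn_S n f :
  Cn (S n) f <-> (forall x, D x -> ex_derive f x) /\ Cn n (Derive f).
Proof.
  split.
  - intros H; split.
    + intros x Hx. exact (H 1%nat x ltac:(lia) Hx).
    + intros [|k] x Hk Hx; [exact I|].
      change (ex_derive (Derive_n (Derive f) k) x).
      rewrite <- Derive_n_S. exact (H (S (S k)) x ltac:(lia) Hx).
  - intros [H1 H2] [|[|k]] x Hk Hx; [exact I | exact (H1 x Hx) |].
    change (ex_derive (Derive_n f (S k)) x).
    rewrite Derive_n_S. exact (H2 (S k) x ltac:(lia) Hx).
Qed.

Lemma Cn_ext n f g : (forall x, D x -> f x = g x) -> Cn n f -> Cn n g.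
Proof.
  intros E H k x Hk Hx. apply (ex_derive_n_ext_loc f g).
  - exact (filter_imp D _ E (D_open x Hx)).
  - exact (H k x Hk Hx).
Qed.

Lemma Cn_plus n f g : Cn n f -> Cn n g -> Cn n (fun x => f x + g x).
Proof.
  revert f g; induction n as [|n IH]; intros f g Hf Hg.
  - intros [|k] x Hk Hx; [exact I | lia].
  - apply Cn_S in Hf as [Hf1 Hf2]. apply Cn_S in Hg as [Hg1 Hg2].
    apply Cn_S; split.
    + intros x Hx. apply (ex_derive_plus f g); auto.
    + apply (Cn_ext n (fun x => Derive f x + Derive g x)); [|now apply IH].
      intros x Hx. rewrite Derive_plus; auto.
Qed.

Lemma Cn_mult n f g : Cn n f -> Cn n g -> Cn n (fun x => f x * g x).
Proof.
  revert f g; induction n as [|n IH]; intros f g Hf Hg.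
  - intros [|k] x Hk Hx; [exact I | lia].
  - assert (Hf0 : Cn n f) by (intros k x Hk; apply Hf; lia).
    assert (Hg0 : Cn n g) by (intros k x Hk; apply Hg; lia).
    apply Cn_S in Hf as [Hf1 Hf2]. apply Cn_S in Hg as [Hg1 Hg2].
    apply Cn_S; split.
    + intros x Hx. apply (ex_derive_mult f g); auto.
    + apply (Cn_ext n (fun x => Derive f x * g x + f x * Derive g x)).
      * intros x Hx. rewrite Derive_mult; auto.
      * apply Cn_plus; apply IH; auto.
Qed.

Lemma Cinf_const c : Cinf (fun _ => c).
Proof. intros n k x _ _. apply ex_derive_n_const. Qed.

Lemma Cinf_id : Cinf (fun x => x).
Proof.
  intros n k x _ _. apply (ex_derive_n_ext (fun x => x ^ 1)).
  - intros t. apply pow_1.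
  - apply ex_derive_n_pow.
Qed.

Lemma Cinf_plus f g : Cinf f -> Cinf g -> Cinf (fun x => f x + g x).
Proof. intros Hf Hg n. apply Cn_plus; auto. Qed.

Lemma Cinf_mult f g : Cinf f -> Cinf g -> Cinf (fun x => f x * g x).
Proof. intros Hf Hg n. apply Cn_mult; auto. Qed.

Lemma Cinf_ex_derive f x : Cinf f -> D x -> ex_derive f x.
Proof. intros H Hx. exact (H 1%nat 1%nat x (le_n 1) Hx). Qed.

Lemma Cinf_Derive f : Cinf f -> Cinf (Derive f).
Proof. intros H n. exact (proj2 (proj1 (Cn_S n f) (H (S n)))). Qed.

Lemma Cinf_inv f : Cinf f -> (forall x, D x -> f x <> 0) -> Cinf (fun x => / f x).
Proof.
  intros Hf Hnz n. induction n as [|n IH].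
  - intros [|k] x Hk Hx; [exact I | lia].
  - apply Cn_S; split.
    + intros x Hx. apply ex_derive_inv; auto. now apply Cinf_ex_derive.
    + apply (Cn_ext n (fun x => (-1) * Derive f x * (/ f x * / f x))).
      * intros x Hx. rewrite Derive_inv; [| now apply Cinf_ex_derive | auto].
        field. now apply Hnz.
      * apply Cn_mult; apply Cn_mult; auto.
        -- apply Cinf_const.
        -- now apply Cinf_Derive.
Qed.

End Smooth.

Lemma Cinf_comp D (D_open : forall x, D x -> locally x D) h f :
  Cinf (fun _ => True) h -> Cinf D f -> Cinf D (fun x => h (f x)).
Proof.
  intros Hh Hf n. revert h Hh. induction n as [|n IH]; intros h Hh.
  - intros [|k] x Hk Hx; [exact I | lia].
  - assert (Hh1 : forall y, ex_derive h y)
      by (intros y; now apply (Cinf_ex_derive (fun _ => True) h y)).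
    apply Cn_S; auto. split.
    + intros x Hx. apply ex_derive_comp; [apply Hh1 | now apply (Cinf_ex_derive D)].
    + apply (Cn_ext D D_open n (fun x => Derive f x * Derive h (f x))).
      * intros x Hx. rewrite (Derive_comp h f x); auto. now apply (Cinf_ex_derive D).
      * apply Cn_mult; auto.
        -- now apply Cinf_Derive.
        -- apply IH. now apply Cinf_Derive.
Qed.

Definition Rpos (x : R) : Prop := 0 < x.

Lemma Rpos_open x : Rpos x -> locally x Rpos.
Proof. exact (open_gt 0 x). Qed.

Lemma smooth_on_I_of_Cinf g f :
  Cinf Rpos g -> (forall e, in_I e -> g e = f e) -> smooth_on_I f.
Proof. intros Hg E. exists g. split; [|exact E]. intros n x Hx. exact (Hg n n x (le_n n) Hx). Qed.

Lemma Cinf_of_smooth_on_I f :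
  smooth_on_I f -> exists g, Cinf Rpos g /\ forall e, in_I e -> g e = f e.
Proof. intros [g [Hg E]]. exists g. split; [|exact E]. intros n k x _ Hx. exact (Hg k x Hx). Qed.

Lemma smooth_on_I_ext f g :
  (forall e, in_I e -> f e = g e) -> smooth_on_I f -> smooth_on_I g.
Proof.
  intros E [h [Hh Eh]]. exists h. split; [exact Hh|].
  intros e He. rewrite <- E by exact He. exact (Eh e He).
Qed.

Lemma smooth_on_I_const c : smooth_on_I (fun _ => c).
Proof. apply (smooth_on_I_of_Cinf (fun _ => c)); [apply Cinf_const | easy]. Qed.

Lemma smooth_on_I_plus f g :
  smooth_on_I f -> smooth_on_I g -> smooth_on_I (fun e => f e + g e).
Proof.
  intros Hf Hg.
  destruct (Cinf_of_smooth_on_I f Hf) as [f' [Hf' Ef]].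
  destruct (Cinf_of_smooth_on_I g Hg) as [g' [Hg' Eg]].
  apply (smooth_on_I_of_Cinf (fun x => f' x + g' x)).
  - now apply (Cinf_plus _ Rpos_open).
  - intros e He. now rewrite Ef, Eg.
Qed.

Lemma smooth_on_I_mult f g :
  smooth_on_I f -> smooth_on_I g -> smooth_on_I (fun e => f e * g e).
Proof.
  intros Hf Hg.
  destruct (Cinf_of_smooth_on_I f Hf) as [f' [Hf' Ef]].
  destruct (Cinf_of_smooth_on_I g Hg) as [g' [Hg' Eg]].
  apply (smooth_on_I_of_Cinf (fun x => f' x * g' x)).
  - now apply (Cinf_mult _ Rpos_open).
  - intros e He. now rewrite Ef, Eg.
Qed.

Lemma smooth_on_I_opp f : smooth_on_I f -> smooth_on_I (fun e => - f e).
Proof.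
  intros Hf. apply (smooth_on_I_ext (fun e => (-1) * f e)); [intros; ring|].
  apply smooth_on_I_mult; [apply smooth_on_I_const | exact Hf].
Qed.

Lemma smooth_net_mul K r s :
  smooth_net K r -> smooth_net K s -> smooth_net K (net_mul r s).
Proof.
  intros [Hr1 [Hr2 Hr3]] [Hs1 [Hs2 Hs3]]. split; [|split].
  - apply (smooth_on_I_ext (fun e => Re (r e) * Re (s e) + - (Im (r e) * Im (s e)))).
    + intros e _. unfold net_mul, Cmult, Re, Im. simpl. ring.
    + apply smooth_on_I_plus; [|apply smooth_on_I_opp]; now apply smooth_on_I_mult.
  - apply (smooth_on_I_ext (fun e => Re (r e) * Im (s e) + Im (r e) * Re (s e))).
    + intros e _. unfold net_mul, Cmult, Re, Im. simpl. ring.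
    + apply smooth_on_I_plus; now apply smooth_on_I_mult.
  - intros HK e He. unfold net_mul, Cmult, Im, Re in *. simpl.
    rewrite (Hr3 HK e He), (Hs3 HK e He). ring.
Qed.

Lemma smooth_net_sub K r s :
  smooth_net K r -> smooth_net K s -> smooth_net K (net_sub r s).
Proof.
  intros [Hr1 [Hr2 Hr3]] [Hs1 [Hs2 Hs3]]. split; [|split].
  - apply (smooth_on_I_ext (fun e => Re (r e) + - Re (s e))).
    + intros e _. unfold net_sub, Cminus, Cplus, Copp, Re. simpl. ring.
    + apply smooth_on_I_plus; [|apply smooth_on_I_opp]; assumption.
  - apply (smooth_on_I_ext (fun e => Im (r e) + - Im (s e))).
    + intros e _. unfold net_sub, Cminus, Cplus, Copp, Im. simpl. ring.
    + apply smooth_on_I_plus; [|apply smooth_on_I_opp]; assumption.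
  - intros HK e He. unfold net_sub, Cminus, Cplus, Copp, Im in *. simpl.
    rewrite (Hr3 HK e He), (Hs3 HK e He). ring.
Qed.

Lemma smooth_net_conj K r :
  smooth_net K r -> smooth_net K (fun e => Cconj (r e)).
Proof.
  intros [Hr1 [Hr2 Hr3]]. split; [|split].
  - apply (smooth_on_I_ext (fun e => Re (r e))); [intros; now rewrite re_conj | exact Hr1].
  - apply (smooth_on_I_ext (fun e => - Im (r e))); [intros; now rewrite im_conj|].
    now apply smooth_on_I_opp.
  - intros HK e He. rewrite im_conj, (Hr3 HK e He). ring.
Qed.

Lemma smooth_net_of_real K S :
  Cinf Rpos S -> smooth_net K (fun e => RtoC (S e)).
Proof.
  intros HS. split; [|split].
  - exact (smooth_on_I_of_Cinf S _ HS (fun e _ => eq_refl)).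
  - exact (smooth_on_I_ext (fun _ => 0) _ (fun e _ => eq_refl) (smooth_on_I_const 0)).
  - easy.
Qed.

Lemma smooth_net_one K : smooth_net K net_one.
Proof. apply (smooth_net_of_real K (fun _ => 1)), Cinf_const. Qed.

Lemma Cmod_sqr_Re_Im z : Cmod z ^ 2 = Re z ^ 2 + Im z ^ 2.
Proof.
  unfold Cmod, Re, Im. apply pow2_sqrt.
  pose proof (pow2_ge_0 (fst z)); pose proof (pow2_ge_0 (snd z)); lra.
Qed.

Lemma smooth_net_Cmod_sqr K r : smooth_net K r ->
  exists q, Cinf Rpos q /\ (forall x, 0 < x -> 0 <= q x) /\
    forall e, in_I e -> q e = Cmod (r e) ^ 2.
Proof.
  intros [Hr1 [Hr2 _]].
  destruct (Cinf_of_smooth_on_I _ Hr1) as [a [Ha Ea]].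
  destruct (Cinf_of_smooth_on_I _ Hr2) as [b [Hb Eb]].
  exists (fun x => a x * a x + b x * b x). split; [|split].
  - apply (Cinf_plus _ Rpos_open); now apply (Cinf_mult _ Rpos_open).
  - intros x _. nra.
  - intros e He. rewrite Cmod_sqr_Re_Im, Ea, Eb by exact He. ring.
Qed.

Lemma Rmin_in_unit a b : 0 < a <= 1 -> 0 < b <= 1 -> 0 < Rmin a b <= 1.
Proof. intros Ha Hb. split; [now apply Rmin_glb_lt | pose proof (Rmin_l a b); lra]. Qed.

Lemma negligible_ext a b : (forall e, a e = b e) -> negligible a -> negligible b.
Proof.
  intros E Ha m. destruct (Ha m) as [c [eta [Hc [Heta Hb]]]].
  exists c, eta. split; [exact Hc | split; [exact Heta|]].
  intros e He. rewrite <- E. exact (Hb e He).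
Qed.

Lemma negligible_mul_l a b : moderate a -> negligible b -> negligible (net_mul a b).
Proof.
  intros [N [c1 [eta1 [Hc1 [Heta1 Ha]]]]] Hb m.
  destruct (Hb (m + N)%nat) as [c2 [eta2 [Hc2 [Heta2 Hb2]]]].
  exists (c1 * c2), (Rmin eta1 eta2).
  split; [nra | split; [now apply Rmin_in_unit|]].
  intros e He. pose proof (Rmin_l eta1 eta2). pose proof (Rmin_r eta1 eta2).
  specialize (Ha e ltac:(lra)). specialize (Hb2 e ltac:(lra)).
  unfold net_mul. rewrite Cmod_mult.
  apply Rle_trans with ((c1 * (/ e) ^ N) * (c2 * e ^ (m + N))).
  - apply Rmult_le_compat; auto using Cmod_ge_0.
  - assert (E : (/ e) ^ N * e ^ (m + N) = e ^ m).
    { rewrite pow_add, pow_inv. field. apply pow_nonzero. lra. }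
    replace (c1 * (/ e) ^ N * (c2 * e ^ (m + N))) with (c1 * c2 * ((/ e) ^ N * e ^ (m + N)))
      by ring.
    rewrite E. lra.
Qed.

Lemma negligible_sub a b : negligible a -> negligible b -> negligible (net_sub a b).
Proof.
  intros Ha Hb m.
  destruct (Ha m) as [c1 [eta1 [Hc1 [Heta1 Ha1]]]].
  destruct (Hb m) as [c2 [eta2 [Hc2 [Heta2 Hb1]]]].
  exists (c1 + c2), (Rmin eta1 eta2).
  split; [lra | split; [now apply Rmin_in_unit|]].
  intros e He. pose proof (Rmin_l eta1 eta2). pose proof (Rmin_r eta1 eta2).
  specialize (Ha1 e ltac:(lra)). specialize (Hb1 e ltac:(lra)).
  unfold net_sub, Cminus. eapply Rle_trans; [apply Cmod_triangle|].
  rewrite Cmod_opp. lra.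
Qed.

Lemma not_negligible_along s (y : nat -> R) delta :
  (forall n, 0 < y n <= / (INR n + 1)) -> 0 < delta ->
  (forall n, delta <= Cmod (s (y n))) -> ~ negligible s.
Proof.
  intros Hy Hd Hs Hneg. destruct (Hneg 1%nat) as [c [eta [Hc [Heta Hb]]]].
  assert (Hq : 0 < Rmin eta (delta / c)).
  { apply Rmin_glb_lt; [lra | now apply Rdiv_lt_0_compat]. }
  destruct (archimed_cor1 _ Hq) as [N [HN HN0]].
  pose proof (Rmin_l eta (delta / c)). pose proof (Rmin_r eta (delta / c)).
  assert (HyN : y N < Rmin eta (delta / c)).
  { apply Rle_lt_trans with (/ (INR N + 1)); [apply Hy|].
    apply Rle_lt_trans with (/ INR N); [|exact HN].
    apply Rinv_le_contravar; [apply lt_0_INR; exact HN0 | lra]. }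
  specialize (Hy N). specialize (Hs N). specialize (Hb (y N) ltac:(lra)).
  assert (c * y N < delta).
  { apply (Rmult_lt_reg_r (/ c)); [now apply Rinv_0_lt_compat|].
    replace (c * y N * / c) with (y N) by (field; lra). unfold Rdiv in *. lra. }
  rewrite pow_1 in Hb. lra.
Qed.

Lemma zero_divisor_not_invertible K r : gen_zero_divisor K r -> ~ gen_invertible K r.
Proof.
  intros [s [Hs [Hns Hrs]]] [t [Ht Hrt]]. apply Hns. split; [exact (proj1 Hs)|].
  apply (negligible_ext (net_sub (net_mul t (net_mul r s))
                                 (net_mul s (net_sub (net_mul r t) net_one)))).
  - intros e. unfold net_sub, net_mul, net_one, Cminus. ring.
  - apply negligible_sub; apply negligible_mul_l.
    + exact (proj2 Ht).
    + exact (proj2 Hrs).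
    + exact (proj2 Hs).
    + exact (proj2 Hrt).
Qed.

(** * A smooth gauge of prescribed growth *)

Lemma Series_ge_term (a : nat -> R) m :
  (forall k, 0 <= a k) -> ex_series a -> a m <= Series a.
Proof.
  intros Hpos Hex.
  rewrite (Series_incr_n a (S m)); [|lia|exact Hex]. simpl pred.
  assert (Hs : a m <= sum_f_R0 a m).
  { destruct m as [|m]; simpl; [lra|]. pose proof (cond_pos_sum a m Hpos). lra. }
  assert (Ht : 0 <= Series (fun k => a (S m + k)%nat)).
  { replace 0 with (Series (fun k => 0 * a k)) by (rewrite Series_scal_l; ring).
    apply Series_le.
    - intros k. rewrite Rmult_0_l. split; [lra | apply Hpos].
    - exact (proj1 (ex_series_incr_n a (S m)) Hex). }
  lra.
Qed.

Lemma CV_radius_ratio (a : nat -> R) :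
  (forall k, 0 < a k) -> (forall k, a (S k) <= / INR (S k) * a k) ->
  CV_radius a = p_infty.
Proof.
  intros Hp Hr. apply CV_radius_infinite_DAlembert.
  - intros k. specialize (Hp k). lra.
  - apply (is_lim_seq_le_le (fun _ => 0) _ (fun k => / INR (S k))).
    + intros k. split; [apply Rabs_pos|].
      pose proof (Hp (S k)). specialize (Hp k). specialize (Hr k).
      rewrite Rabs_right.
      * apply (Rmult_le_reg_r (a k)); [lra|]. unfold Rdiv.
        rewrite Rmult_assoc, Rinv_l by lra. lra.
      * apply Rle_ge, Rlt_le, Rdiv_lt_0_compat; lra.
    + apply is_lim_seq_const.
    + apply (is_lim_seq_incr_1 (fun k => / INR k)).
      replace (Finite 0) with (Rbar_inv p_infty) by reflexivity.
      apply is_lim_seq_inv; [apply is_lim_seq_INR | discriminate].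
Qed.

Lemma ex_series_inv_fact : ex_series (fun k => / INR (Factorial.fact k)).
Proof.
  assert (Hr : CV_radius (fun k => / INR (Factorial.fact k)) = p_infty).
  { apply CV_radius_ratio.
    - intros k. apply Rinv_0_lt_compat, INR_fact_lt_0.
    - intros k. rewrite fact_simpl, mult_INR, Rinv_mult. lra. }
  assert (H := CV_radius_inside (fun k => / INR (Factorial.fact k)) 1).
  rewrite Hr in H. specialize (H I).
  revert H. apply ex_series_ext. intros k. simpl. rewrite pow_n_pow, pow1. apply Rmult_1_l.
Qed.

Lemma exp_1_Series : exp 1 = Series (fun k => / INR (Factorial.fact k)).
Proof. rewrite exp_Reals. unfold PSeries. apply Series_ext. intros k. rewrite pow1. ring. Qed.

Definition rapidly_growing (G : R -> R) : Prop :=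
  forall m, exists c, 0 < c /\ forall x, 0 < x -> c / x ^ m <= G x.

Lemma rapidly_growing_pos G x : rapidly_growing G -> 0 < x -> 0 < G x.
Proof.
  intros HG Hx. destruct (HG 0%nat) as [c [Hc Hb]].
  specialize (Hb x Hx). simpl in Hb. unfold Rdiv in Hb. rewrite Rinv_1 in Hb. lra.
Qed.

(* The gauge is [G x = sum_k c_k x^(-k)] with [c_k = (y_0 ... y_(k-1))^k / k!]: it dominates
   every power of [1/x], while at [x = y_n] the terms [k > n] are at most [1/k!]. *)
Section Gauge.
Variable y : nat -> R.
Hypothesis y_range : forall j, 0 < y j <= 1.

Fixpoint gauge_prod k := match k with O => 1 | S k => gauge_prod k * y k end.

Definition gauge_coef k := / INR (Factorial.fact k) * gauge_prod k ^ k.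

Definition gauge x := PSeries gauge_coef (/ x).

Lemma gauge_prod_range k : 0 < gauge_prod k <= 1.
Proof.
  induction k as [|k IH]; simpl; [lra|]. specialize (y_range k). split; nra.
Qed.

Lemma gauge_prod_S_le k : gauge_prod (S k) <= gauge_prod k.
Proof. simpl. pose proof (gauge_prod_range k). specialize (y_range k). nra. Qed.

Lemma gauge_prod_le j k : (j < k)%nat -> gauge_prod k <= y j.
Proof.
  induction k as [|k IH]; intros Hjk; [lia|].
  destruct (Nat.eq_dec j k) as [->|Hne].
  - simpl. pose proof (gauge_prod_range k). specialize (y_range k). nra.
  - pose proof (gauge_prod_S_le k). pose proof (IH ltac:(lia)). lra.
Qed.

Lemma gauge_coef_pos k : 0 < gauge_coef k.
Proof.
  apply Rmult_lt_0_compat; [apply Rinv_0_lt_compat, INR_fact_lt_0|].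
  apply pow_lt, gauge_prod_range.
Qed.

Lemma CV_radius_gauge_coef : CV_radius gauge_coef = p_infty.
Proof.
  apply CV_radius_ratio; [apply gauge_coef_pos|].
  intros k. unfold gauge_coef.
  rewrite fact_simpl, mult_INR, Rinv_mult.
  pose proof (Rinv_0_lt_compat _ (INR_fact_lt_0 k)).
  assert (0 < / INR (S k)) by (apply Rinv_0_lt_compat, lt_0_INR; lia).
  assert (gauge_prod (S k) ^ S k <= gauge_prod k ^ k).
  { pose proof (gauge_prod_range (S k)). pose proof (gauge_prod_range k).
    assert (gauge_prod (S k) ^ k <= gauge_prod k ^ k)
      by (apply pow_incr; pose proof (gauge_prod_S_le k); lra).
    assert (0 <= gauge_prod (S k) ^ k) by (apply pow_le; lra).
    change (gauge_prod (S k) ^ S k) with (gauge_prod (S k) * gauge_prod (S k) ^ k).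
    nra. }
  rewrite Rmult_assoc. apply Rmult_le_compat_l; [lra|].
  apply Rmult_le_compat_l; lra.
Qed.

Lemma Cinf_gauge : Cinf Rpos gauge.
Proof.
  apply (Cinf_comp _ Rpos_open (PSeries gauge_coef) (fun x => / x)).
  - intros n k x _ _. apply ex_derive_n_PSeries. now rewrite CV_radius_gauge_coef.
  - apply (Cinf_inv _ Rpos_open); [apply Cinf_id|].
    intros x Hx. unfold Rpos in Hx. lra.
Qed.

Lemma gauge_rapidly_growing : rapidly_growing gauge.
Proof.
  intros m. exists (gauge_coef m). split; [apply gauge_coef_pos|].
  intros x Hx. unfold Rdiv. rewrite <- pow_inv.
  apply (Series_ge_term (fun k => gauge_coef k * (/ x) ^ k)).
  - intros k. apply Rmult_le_pos; [apply Rlt_le, gauge_coef_pos|].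
    apply pow_le, Rlt_le, Rinv_0_lt_compat, Hx.
  - assert (H := CV_radius_inside gauge_coef (/ x)).
    rewrite CV_radius_gauge_coef in H. specialize (H I).
    revert H. apply ex_series_ext. intros k. apply Rmult_comm.
Qed.

Lemma gauge_le n : gauge (y n) <= exp 1 * / y n ^ n.
Proof.
  unfold gauge, PSeries. rewrite exp_1_Series, <- pow_inv, <- Series_scal_r.
  pose proof (y_range n) as Hyn.
  assert (Hinv : 1 <= / y n) by (rewrite <- Rinv_1; apply Rinv_le_contravar; lra).
  assert (Hpow : 1 <= (/ y n) ^ n) by (rewrite <- (pow1 n); apply pow_incr; lra).
  apply Series_le.
  - intros k. pose proof (Rinv_0_lt_compat _ (INR_fact_lt_0 k)).
    pose proof (gauge_prod_range k).
    assert (0 <= (/ y n) ^ k) by (apply pow_le; lra).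
    assert (gauge_prod k ^ k <= 1) by (rewrite <- (pow1 k); apply pow_incr; lra).
    split; [apply Rmult_le_pos; [apply Rlt_le, gauge_coef_pos | lra]|].
    unfold gauge_coef. rewrite Rmult_assoc. apply Rmult_le_compat_l; [lra|].
    destruct (Compare_dec.le_lt_dec k n) as [Hk|Hk].
    + apply Rle_trans with ((/ y n) ^ k); [|now apply Rle_pow].
      rewrite <- (Rmult_1_l ((/ y n) ^ k)) at 2. apply Rmult_le_compat_r; lra.
    + assert (gauge_prod k ^ k * (/ y n) ^ k <= 1); [|lra].
      rewrite <- Rpow_mult_distr, <- (pow1 k). apply pow_incr.
      pose proof (gauge_prod_le n k Hk). split; [apply Rmult_le_pos; lra|].
      apply (Rmult_le_reg_r (y n)); [lra|].
      rewrite Rmult_assoc, Rinv_l by lra. lra.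
  - apply ex_series_scal_r, ex_series_inv_fact.
Qed.

End Gauge.

Lemma gauge_exists (y : nat -> R) : (forall j, 0 < y j <= 1) ->
  exists G, Cinf Rpos G /\ rapidly_growing G /\ forall n, G (y n) <= exp 1 * / y n ^ n.
Proof.
  intros Hy. exists (gauge y). split; [|split].
  - exact (Cinf_gauge y Hy).
  - exact (gauge_rapidly_growing y Hy).
  - exact (gauge_le y Hy).
Qed.

(** * Invertible elements and zero divisors *)

Lemma div_sqr_add_le_inv rho d : 0 < rho -> 0 <= d -> rho / (rho ^ 2 + d) <= / rho.
Proof.
  intros Hr Hd. apply Rle_trans with (rho / rho ^ 2).
  - unfold Rdiv. apply Rmult_le_compat_l; [lra|]. apply Rinv_le_contravar; nra.
  - apply Req_le. field. lra.
Qed.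

Lemma div_add_sqr_le d rho : 0 < rho -> 0 <= d -> d / (rho ^ 2 + d) <= d / rho ^ 2.
Proof.
  intros Hr Hd. unfold Rdiv. apply Rmult_le_compat_l; [exact Hd|].
  apply Rinv_le_contravar; nra.
Qed.

Lemma damped_le rho g a :
  0 <= rho -> 0 < g -> 0 < a -> rho / (1 + g * rho ^ 2) <= a + / (g * a).
Proof.
  intros Hr Hg Ha.
  assert (Hden : 0 < 1 + g * rho ^ 2) by nra.
  assert (0 < / (g * a)) by (apply Rinv_0_lt_compat; nra).
  destruct (Rle_lt_dec rho a) as [Hle|Hlt].
  - enough (rho / (1 + g * rho ^ 2) <= rho) by lra.
    apply Rle_trans with (rho * / 1); [|lra].
    apply Rmult_le_compat_l; [lra|]. apply Rinv_le_contravar; nra.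
  - enough (rho / (1 + g * rho ^ 2) <= / (g * a)) by lra.
    assert (0 < g * rho ^ 2) by (apply Rmult_lt_0_compat; [lra | apply pow_lt; lra]).
    apply Rle_trans with (rho / (g * rho ^ 2)).
    + unfold Rdiv. apply Rmult_le_compat_l; [lra|]. apply Rinv_le_contravar; nra.
    + replace (rho / (g * rho ^ 2)) with (/ (g * rho)) by (field; lra).
      apply Rinv_le_contravar; nra.
Qed.

Lemma inv_INR_S_range n : 0 < / (INR n + 1) <= 1.
Proof.
  pose proof (pos_INR n). split; [apply Rinv_0_lt_compat; lra|].
  rewrite <- Rinv_1. apply Rinv_le_contravar; lra.
Qed.

Definition strictly_nonzero (r : net) : Prop :=
  exists n, forall e, 0 < e <= / (INR n + 1) -> e ^ n <= Cmod (r e).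

Section Inverse.
Variables (r : net) (n : nat) (q G : R -> R).
Hypothesis r_bound : forall e, 0 < e <= / (INR n + 1) -> e ^ n <= Cmod (r e).
Hypothesis q_Cmod : forall e, in_I e -> q e = Cmod (r e) ^ 2.
Hypothesis G_grow : rapidly_growing G.

Definition inverse_weight x := / (q x + / G x).

Definition inverse_net : net :=
  net_mul (fun e => Cconj (r e)) (fun e => RtoC (inverse_weight e)).

Lemma inverse_weight_below e : 0 < e <= / (INR n + 1) ->
  0 < e ^ n <= Cmod (r e) /\ 0 < / G e /\
  inverse_weight e = / (Cmod (r e) ^ 2 + / G e).
Proof.
  intros He. pose proof (inv_INR_S_range n).
  split; [split; [apply pow_lt; lra | now apply r_bound]|].
  split; [apply Rinv_0_lt_compat, (rapidly_growing_pos G); auto; lra|].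
  unfold inverse_weight. rewrite q_Cmod by (unfold in_I; lra). reflexivity.
Qed.

Lemma moderate_inverse_net : moderate inverse_net.
Proof.
  exists n, 1, (/ (INR n + 1)).
  split; [lra | split; [apply inv_INR_S_range|]].
  intros e He. destruct (inverse_weight_below e He) as [[Hen Hrho] [Hd HW]].
  unfold inverse_net, net_mul. rewrite Cmod_mult, Cmod_conj, Cmod_R, HW.
  rewrite Rabs_right by (apply Rle_ge, Rlt_le, Rinv_0_lt_compat; nra).
  rewrite Rmult_1_l, pow_inv.
  apply Rle_trans with (/ Cmod (r e)); [apply div_sqr_add_le_inv; lra|].
  apply Rinv_le_contravar; lra.
Qed.

Lemma inverse_net_defect e : 0 < e <= / (INR n + 1) ->
  net_sub (net_mul r inverse_net) net_one e =
  RtoC (- (/ G e / (Cmod (r e) ^ 2 + / G e))).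
Proof.
  intros He. destruct (inverse_weight_below e He) as [[Hen Hrho] [Hd HW]].
  unfold inverse_net, net_sub, net_mul, net_one.
  rewrite Cmult_assoc, <- Cmod2_conj, HW, <- RtoC_mult, <- RtoC_minus.
  assert (HG : 0 < G e) by (apply (rapidly_growing_pos G); auto; lra).
  pose proof (pow2_ge_0 (Cmod (r e))).
  f_equal. field. split; nra.
Qed.

Lemma negligible_inverse_net_defect :
  negligible (net_sub (net_mul r inverse_net) net_one).
Proof.
  intros m. destruct (G_grow (m + n + n)%nat) as [c [Hc HGc]].
  exists (/ c), (/ (INR n + 1)).
  split; [now apply Rinv_0_lt_compat | split; [apply inv_INR_S_range|]].
  intros e He. pose proof (inv_INR_S_range n).
  destruct (inverse_weight_below e He) as [[Hen Hrho] [Hd _]].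
  rewrite inverse_net_defect by exact He.
  set (rho := Cmod (r e)) in *. set (d := / G e) in *.
  rewrite Cmod_R, Rabs_Ropp, Rabs_right by (apply Rle_ge, Rlt_le, Rdiv_lt_0_compat; nra).
  assert (Hdle : d <= e ^ (m + n + n) / c).
  { specialize (HGc e ltac:(lra)).
    assert (0 < e ^ (m + n + n)) by (apply pow_lt; lra).
    replace (e ^ (m + n + n) / c) with (/ (c / e ^ (m + n + n))) by (field; lra).
    apply Rinv_le_contravar; [apply Rdiv_lt_0_compat; lra | exact HGc]. }
  apply Rle_trans with (d / rho ^ 2); [apply div_add_sqr_le; lra|].
  apply Rle_trans with (e ^ (m + n + n) / c / (e ^ n) ^ 2).
  - unfold Rdiv. apply Rmult_le_compat; try lra.
    + apply Rlt_le, Rinv_0_lt_compat. nra.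
    + apply Rinv_le_contravar; [nra | apply pow_incr; lra].
  - rewrite !pow_add. apply Req_le. field. split; [lra | apply pow_nonzero; lra].
Qed.

End Inverse.

Lemma strictly_nonzero_invertible K r : EMsm K r -> strictly_nonzero r -> gen_invertible K r.
Proof.
  intros [Hr _] [n Hn].
  destruct (smooth_net_Cmod_sqr K r Hr) as [q [Hq [Hq0 Eq]]].
  destruct (gauge_exists (fun _ => 1)) as [G [HG [HGgrow _]]]; [intros; lra|].
  pose proof (fun x => rapidly_growing_pos G x HGgrow) as HGpos.
  assert (HW : Cinf Rpos (inverse_weight q G)).
  { apply (Cinf_inv _ Rpos_open).
    - apply (Cinf_plus _ Rpos_open); [exact Hq|].
      apply (Cinf_inv _ Rpos_open); [exact HG|].
      intros x Hx. specialize (HGpos x Hx). lra.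
    - intros x Hx. specialize (Hq0 x Hx).
      pose proof (Rinv_0_lt_compat _ (HGpos x Hx)). lra. }
  assert (Ht : smooth_net K (inverse_net r q G)).
  { apply smooth_net_mul; [now apply smooth_net_conj | now apply smooth_net_of_real]. }
  exists (inverse_net r q G). split; [split | split].
  - exact Ht.
  - now apply (moderate_inverse_net r n).
  - apply smooth_net_sub; [now apply smooth_net_mul | apply smooth_net_one].
  - now apply (negligible_inverse_net_defect r n).
Qed.

Section Annihilator.
Variables (r : net) (y : nat -> R) (q G : R -> R).
Hypothesis y_small : forall n, 0 < y n <= / (INR n + 1) /\ Cmod (r (y n)) < y n ^ n.
Hypothesis q_Cmod : forall e, in_I e -> q e = Cmod (r e) ^ 2.
Hypothesis G_grow : rapidly_growing G.
Hypothesis G_along : forall n, G (y n) <= exp 1 * / y n ^ n.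

Definition annihilator x := / (1 + G x * q x).

Definition annihilator_net : net := fun e => RtoC (annihilator e).

Lemma Cmod_annihilator_net e : in_I e ->
  0 < 1 + G e * Cmod (r e) ^ 2 /\
  Cmod (annihilator_net e) = / (1 + G e * Cmod (r e) ^ 2).
Proof.
  intros He. assert (HG : 0 < G e) by (apply (rapidly_growing_pos G); auto; apply He).
  pose proof (pow2_ge_0 (Cmod (r e))).
  assert (Hden : 0 < 1 + G e * Cmod (r e) ^ 2) by nra.
  split; [exact Hden|].
  unfold annihilator_net, annihilator. rewrite q_Cmod by exact He.
  rewrite Cmod_R, Rabs_right; [reflexivity|].
  apply Rle_ge, Rlt_le, Rinv_0_lt_compat, Hden.
Qed.

Lemma moderate_annihilator_net : moderate annihilator_net.
Proof.
  exists 0%nat, 1, 1. split; [lra | split; [lra|]].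
  intros e He. destruct (Cmod_annihilator_net e He) as [Hden ->].
  apply Rle_trans with (/ 1); [|rewrite pow_O, Rinv_1; lra].
  apply Rinv_le_contravar; [lra|].
  assert (0 < G e) by (apply (rapidly_growing_pos G); auto; lra).
  pose proof (pow2_ge_0 (Cmod (r e))). nra.
Qed.

Lemma not_negligible_annihilator_net : ~ negligible annihilator_net.
Proof.
  apply (not_negligible_along _ y (/ (1 + exp 1))).
  - intros n. apply y_small.
  - apply Rinv_0_lt_compat. pose proof (exp_pos 1). lra.
  - intros n. destruct (y_small n) as [Hyn Hrn].
    assert (Hyn1 : in_I (y n)) by (pose proof (inv_INR_S_range n); split; lra).
    destruct (Cmod_annihilator_net (y n) Hyn1) as [Hden ->].
    apply Rinv_le_contravar; [exact Hden|].
    assert (Hpow : 0 < y n ^ n <= 1)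
      by (destruct Hyn1; split; [apply pow_lt | rewrite <- (pow1 n); apply pow_incr]; lra).
    assert (Hr2 : Cmod (r (y n)) ^ 2 <= (y n ^ n) ^ 2)
      by (apply pow_incr; split; [apply Cmod_ge_0 | lra]).
    assert (0 < G (y n)) by (apply (rapidly_growing_pos G); auto; apply Hyn1).
    apply Rplus_le_compat_l.
    apply Rle_trans with (exp 1 * / y n ^ n * (y n ^ n) ^ 2).
    + apply Rmult_le_compat; [lra | apply pow2_ge_0 | apply G_along | exact Hr2].
    + replace (exp 1 * / y n ^ n * (y n ^ n) ^ 2) with (exp 1 * y n ^ n) by (field; lra).
      pose proof (exp_pos 1). nra.
Qed.

Lemma negligible_mul_annihilator_net : negligible (net_mul r annihilator_net).
Proof.
  intros m. destruct (G_grow (m + m)%nat) as [c [Hc HGc]].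
  exists (1 + / c), 1. split; [pose proof (Rinv_0_lt_compat _ Hc); lra | split; [lra|]].
  intros e He. destruct (Cmod_annihilator_net e He) as [_ HS].
  assert (Hem : 0 < e ^ m) by (apply pow_lt; lra).
  assert (HG : 0 < G e) by (apply (rapidly_growing_pos G); auto; lra).
  specialize (HGc e (proj1 He)).
  unfold net_mul. rewrite Cmod_mult, HS.
  apply Rle_trans with (e ^ m + / (G e * e ^ m));
    [apply damped_le; [apply Cmod_ge_0 | exact HG | exact Hem]|].
  assert (/ (G e * e ^ m) <= / c * e ^ m); [|lra].
  replace (/ c * e ^ m) with (/ (c / e ^ (m + m) * e ^ m)) by (rewrite pow_add; field; lra).
  apply Rinv_le_contravar; [|apply Rmult_le_compat_r; lra].
  apply Rmult_lt_0_compat; [apply Rdiv_lt_0_compat; [lra | apply pow_lt; lra] | exact Hem].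
Qed.

End Annihilator.

Lemma not_strictly_nonzero_zero_divisor K r :
  EMsm K r -> ~ strictly_nonzero r -> gen_zero_divisor K r.
Proof.
  intros [Hr _] Hnsn.
  assert (Hsmall : forall n, exists e, 0 < e <= / (INR n + 1) /\ Cmod (r e) < e ^ n).
  { intros n. apply NNPP. intros Hno. apply Hnsn. exists n.
    intros e He. apply Rnot_lt_le. intros Hlt. apply Hno. now exists e. }
  destruct (choice _ Hsmall) as [y Hy].
  assert (Hy1 : forall j, 0 < y j <= 1)
    by (intros j; pose proof (inv_INR_S_range j); destruct (Hy j); lra).
  destruct (gauge_exists y Hy1) as [G [HG [HGgrow HGy]]].
  pose proof (fun x => rapidly_growing_pos G x HGgrow) as HGpos.
  destruct (smooth_net_Cmod_sqr K r Hr) as [q [Hq [Hq0 Eq]]].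
  assert (HS : smooth_net K (annihilator_net q G)).
  { apply smooth_net_of_real, (Cinf_inv _ Rpos_open).
    - apply (Cinf_plus _ Rpos_open); [apply Cinf_const|].
      now apply (Cinf_mult _ Rpos_open).
    - intros x Hx. specialize (HGpos x Hx). specialize (Hq0 x Hx). nra. }
  exists (annihilator_net q G). split; [|split].
  - split; [exact HS | now apply (moderate_annihilator_net r)].
  - intros [_ Hneg]. exact (not_negligible_annihilator_net r y q G Hy Eq HGgrow HGy Hneg).
  - split; [now apply smooth_net_mul|].
    now apply (negligible_mul_annihilator_net r).
Qed.

Theorem proposition4p1 (K : Kfield) (r : net) :
  EMsm K r -> (~ gen_invertible K r <-> gen_zero_divisor K r).
Proof.
  intros Hr. split.
  - intros Hni. apply (not_strictly_nonzero_zero_divisor K r Hr).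
    intros Hsn. exact (Hni (strictly_nonzero_invertible K r Hr Hsn)).
  - apply zero_divisor_not_invertible.
Qed.
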